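(* For the two-pathogen model described in the context with positive parameters: (1) If $s=0$, $\mathcal{R}_{0,A}>1$ and $\mathcal{R}_{0,B}<1$, the disease-$B$-free equilibrium $(S_A,I_A,\widetilde I_A,S_B,I_B,\widetilde I_B)=(1-\bar I_A-\tfrac{\tau_R}{\tau_I}\bar I_A,\bar I_A,\bar I_A,1,0,0)$ is locally asymptotically stable; symmetrically, if $s=0$, $\mathcal{R}_{0,B}>1$ and $\mathcal{R}_{0,A}<1$, the disease-$A$-free equilibrium $(1,0,0,1-\bar I_B-\tfrac{\tau_R}{\tau_I}\bar I_B,\bar I_B,\bar I_B)$ is locally asymptotically stable. (2) If $s=1$, $\mathcal{R}_{0,A}>1$ and $\mathcal{R}_{0,B}<e^{k\bar I_A}$, the disease-$B$-free equilibrium is locally asymptotically stable, and in this case $\mathcal{R}_{0,A}>\mathcal{R}_{0,B}$; symmetrically, if $s=1$, $\mathcal{R}_{0,B}>1$ and $\mathcal{R}_{0,A}<e^{k\bar I_B}$, the disease-$A$-free equilibrium is locally asymptotically stable and $\mathcal{R}_{0,B}>\mathcal{R}_{0,A}$. (3) If $s\in(0,1)$, $\mathcal{R}_{0,A}>1$ and $\mathcal{R}_{0,B}<\dfrac{e^{k\bar I_A}}{e^{k\bar I_A}-s(e^{k\bar I_A}-1)}$, the disease-$B$-free equilibrium is locally asymptotically stable, and $\mathcal{R}_{0,A}>\mathcal{R}_{0,B}$; symmetrically, if $s\in(0,1)$, $\mathcal{R}_{0,B}>1$ and $\mathcal{R}_{0,A}<\dfrac{e^{k\bar I_B}}{e^{k\bar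 I_B}-s(e^{k\bar I_B}-1)}$, the disease-$A$-free equilibrium is locally asymptotically stable and $\mathcal{R}_{0,B}>\mathcal{R}_{0,A}$.
   Context: Model: for $i\in\{A,B\}$ with $j$ denoting the other disease, state variables $S_i,I_i,R_i,\widetilde I_i$ satisfy $\dot S_i=-\beta_i S_iI_i+R_i/\tau_R$, $\dot I_i=\beta_iS_iI_i-I_i/\tau_I$, $\dot R_i=I_i/\tau_I-R_i/\tau_R$, $\dot{\widetilde I}_i=(I_i-\widetilde I_i)/\tau_P$, with $S_i+I_i+R_i=1$, where $\beta_i=\beta_{0,i}\,e^{-k\widetilde I_i}\bigl(1-s(1-e^{-k\widetilde I_j})\bigr)$. All parameters $\beta_{0,A},\beta_{0,B},\tau_I,\tau_R,\tau_P,k$ are positive and $s\in[0,1]$ is the spillover constant. $\mathcal{R}_{0,i}=\beta_{0,i}\tau_I$. When $\mathcal{R}_{0,i}>1$, $\bar I_i$ denotes the unique positive solution of $e^{kI}=\beta_{0,i}\tau_I-\beta_{0,i}(\tau_I+\tau_R)I$. The reduced system is obtained by substituting $R_i=1-S_i-I_i$ and keeping only the equations for $S_i,I_i,\widetilde I_i$; equilibria are written in the order $(S_A,I_A,\widetilde I_A,S_B,I_B,\widetilde I_B)$. Locally asymptotically stable means all eigenvalues of the Jacobian of the reduced system at the equilibrium have negative real part. *)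

From HB Require Import structures.
From mathcomp Require Import all_boot all_order all_algebra.
From mathcomp Require Import all_classical all_reals all_analysis.
From mathcomp Require Import complex.
Set Implicit Arguments. Unset Strict Implicit. Unset Printing Implicit Defensive.
Import Order.TTheory GRing.Theory Num.Theory.
Import numFieldNormedType.Exports.
Local Open Scope ring_scope.

Section TwoPathogen.
Variable R : realType.

(* coordinate n of a state vector x = (S_A, I_A, Itilde_A, S_B, I_B, Itilde_B) *)
Definition coord (x : 'rV[R]_6) (n : nat) : R := x ord0 (inord n).

Definition beta_eff (b0 k s Iti Itj : R) : R :=
  b0 * expR (- (k * Iti)) * (1 - s * (1 - expR (- (k * Itj)))).

(* right-hand sides of the reduced system for disease i (R_i = 1 - S_i - I_i) *)
Definition rhsS (b0 k s tI tR tP Si Ii Iti Itj : R) : R :=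
  - (beta_eff b0 k s Iti Itj * Si * Ii) + (1 - Si - Ii) / tR.
Definition rhsI (b0 k s tI tR tP Si Ii Iti Itj : R) : R :=
  beta_eff b0 k s Iti Itj * Si * Ii - Ii / tI.
Definition rhsIt (tP Ii Iti : R) : R := (Ii - Iti) / tP.

Definition reduced_field (b0A b0B tI tR tP k s : R) (x : 'rV[R]_6) : 'rV[R]_6 :=
  let SA := coord x 0 in let IA := coord x 1 in let ItA := coord x 2 in
  let SB := coord x 3 in let IB := coord x 4 in let ItB := coord x 5 in
  \row_(i < 6)
    nth 0 [:: rhsS b0A k s tI tR tP SA IA ItA ItB;
              rhsI b0A k s tI tR tP SA IA ItA ItB;
              rhsIt tP IA ItA;
              rhsS b0B k s tI tR tP SB IB ItB ItA;
              rhsI b0B k s tI tR tP SB IB ItB ItA;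
              rhsIt tP IB ItB] i.

Definition state6 (a0 a1 a2 a3 a4 a5 : R) : 'rV[R]_6 :=
  \row_(i < 6) nth 0 [:: a0; a1; a2; a3; a4; a5] i.

Definition eigenvalueC n (M : 'M[R]_n) (z : R[i]) : Prop :=
  root (char_poly (map_mx (fun r : R => (r%:C)%C) M)) z.

Definition LAS (b0A b0B tI tR tP k s : R) (e : 'rV[R]_6) : Prop :=
  forall z : R[i],
    eigenvalueC (jacobian (reduced_field b0A b0B tI tR tP k s) e) z ->
    complex.Re z < 0.

Definition Ibar_spec (b0 tI tR k I : R) : Prop :=
  0 < I /\ expR (k * I) = b0 * tI - b0 * (tI + tR) * I.

Definition B_free_eq (tI tR IA : R) : 'rV[R]_6 :=
  state6 (1 - IA - tR / tI * IA) IA IA 1 0 0.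
Definition A_free_eq (tI tR IB : R) : 'rV[R]_6 :=
  state6 1 0 0 (1 - IB - tR / tI * IB) IB IB.

End TwoPathogen.

From Pilot Require Import Defs.
From HB Require Import structures.
From mathcomp Require Import all_boot all_order all_algebra.
From mathcomp Require Import all_classical all_reals all_analysis.
From mathcomp Require Import complex.
From mathcomp Require Import ring lra zify.
Set Implicit Arguments. Unset Strict Implicit. Unset Printing Implicit Defensive.
Import Order.TTheory GRing.Theory Num.Theory.
Import numFieldNormedType.Exports.
Local Open Scope ring_scope.
(* [Defs.coord] is shadowed by [vector.coord]. *)
Import Defs.

(** At a boundary equilibrium where disease [j] is absent, the equations of
   [j] depend on the resident disease [i] only through terms carrying the
   factor [I_j = 0], so the Jacobian is block triangular and its eigenvalues
   are those of two 3x3 blocks.  By Routh-Hurwitz, a cubic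
   [z^3 + a2 z^2 + a1 z + a0] has all its roots in the open left half plane
   when [a2 > 0], [a0 > 0] and [a2 a1 > a0].  The block of the resident
   disease satisfies these conditions for all positive parameters.  The block
   of the absent disease is triangular with diagonal
   [-1/tR, g - 1/tI, -1/tP], where [g = b0_j (1 - s (1 - e^{-k Ibar_i}))] is
   its invasion rate, and [g < 1/tI] is exactly the threshold of the theorem.
   Finally the equation defining [Ibar] gives [e^{k Ibar} < R0_i], whence the
   comparison of the basic reproduction numbers. *)

Section DirectionalDerivative.
Variables (R : realType) (V : normedModType R).

Lemma derive_along_line (f : V -> R) p v :
  'D_v f p = 'D_1 (fun t : R => f (t *: v + p)) 0.
Proof.
rewrite /derive.
have -> : (fun h : R => h^-1 *: ((f \o shift p) (h *: v) - f p)) =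
  (fun h : R => h^-1 *: (((fun t : R => f (t *: v + p)) \o shift 0) h%:A - f (0 *: v + p))).
  by apply: funext => h /=; rewrite addr0 scale0r add0r [_%:A]mulr1.
by [].
Qed.

Lemma is_derive_expR_comp (h : V -> R) p v dh : is_derive p v h dh ->
  is_derive p v (fun x => expR (h x)) (expR (h p) * dh).
Proof.
move=> [hp hdh].
pose line t := h (t *: v + p).
have line0 : line 0 = h p by rewrite /line scale0r add0r.
have dline : is_derive (0 : R) 1 line dh.
  apply: DeriveDef; first exact: (derivable1P h p v).1 hp.
  by rewrite -derive_along_line.
have dexp : is_derive (line 0) 1 expR (expR (h p)).
  by rewrite line0; exact: is_derive_expR.
have [dcomp Dcomp] := is_derive1_comp dexp dline.
apply: DeriveDef; first exact: (derivable1P (fun x => expR (h x)) p v).2 dcomp.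
by rewrite derive_along_line Dcomp.
Qed.

Lemma differentiable_expR_comp (h : V -> R) p : differentiable h p ->
  differentiable (fun x => expR (h x)) p.
Proof.
move=> dh; apply: (differentiable_comp (g := expR)) => //.
exact/derivable1_diffP/derivable_expR.
Qed.

End DirectionalDerivative.

Section ReducedFieldJacobian.
Variables (R : realType) (b0A b0B tI tR tP k s : R).

Definition beta_eff_D (b0 Iti Itj dIti dItj : R) : R :=
  - k * dIti * beta_eff b0 k s Iti Itj
  - b0 * expR (- (k * Iti)) * s * k * dItj * expR (- (k * Itj)).
Definition incidence_D (b0 Si Ii Iti Itj dSi dIi dIti dItj : R) : R :=
  beta_eff_D b0 Iti Itj dIti dItj * Si * Ii + beta_eff b0 k s Iti Itj * dSi * Ii
  + beta_eff b0 k s Iti Itj * Si * dIi.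
Definition rhsS_D (b0 Si Ii Iti Itj dSi dIi dIti dItj : R) : R :=
  - incidence_D b0 Si Ii Iti Itj dSi dIi dIti dItj - (dSi + dIi) / tR.
Definition rhsI_D (b0 Si Ii Iti Itj dSi dIi dIti dItj : R) : R :=
  incidence_D b0 Si Ii Iti Itj dSi dIi dIti dItj - dIi / tI.
Definition rhsIt_D (dIi dIti : R) : R := (dIi - dIti) / tP.

Definition field_coords (x : 'rV[R]_6) : seq R :=
  let SA := coord x 0 in let IA := coord x 1 in let ItA := coord x 2 in
  let SB := coord x 3 in let IB := coord x 4 in let ItB := coord x 5 in
  [:: rhsS b0A k s tI tR tP SA IA ItA ItB;
      rhsI b0A k s tI tR tP SA IA ItA ItB;
      rhsIt tP IA ItA;
      rhsS b0B k s tI tR tP SB IB ItB ItA;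
      rhsI b0B k s tI tR tP SB IB ItB ItA;
      rhsIt tP IB ItB].

Definition field_coords_D (x v : nat -> R) : seq R :=
  [:: rhsS_D b0A (x 0) (x 1) (x 2) (x 5) (v 0) (v 1) (v 2) (v 5);
      rhsI_D b0A (x 0) (x 1) (x 2) (x 5) (v 0) (v 1) (v 2) (v 5);
      rhsIt_D (v 1) (v 2);
      rhsS_D b0B (x 3) (x 4) (x 5) (x 2) (v 3) (v 4) (v 5) (v 2);
      rhsI_D b0B (x 3) (x 4) (x 5) (x 2) (v 3) (v 4) (v 5) (v 2);
      rhsIt_D (v 4) (v 5)].

Lemma is_derive_coord (p v : 'rV[R]_6) n :
  is_derive p v (fun x : 'rV[R]_6 => coord x n) (coord v n).
Proof.
apply: DeriveDef; first exact/diff_derivable/differentiable_coord.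
have did : derivable (@id 'rV[R]_6) p v by exact: derivable_id.
by rewrite /coord -[in RHS](derive_id p v) (derive_mx did) mxE.
Qed.

Ltac derive_chain := repeat first [ eapply is_derive_coord
  | eapply is_derive_expR_comp | eapply is_deriveD | eapply is_deriveN
  | eapply is_deriveM | eapply is_derive_cst ].

Ltac differentiable_chain := repeat first [ eapply differentiable_coord
  | eapply differentiable_expR_comp | eapply differentiableD
  | eapply differentiableN | eapply differentiableM | eapply differentiable_cst ].

Lemma is_derive_field_coords (p v : 'rV[R]_6) (j : nat) : (j < 6)%N ->
  is_derive p v (fun x => nth 0 (field_coords x) j)
    (nth 0 (field_coords_D (coord p) (coord v)) j).
Proof.
case: j => [|[|[|[|[|[|j]]]]]] // _;
  rewrite /field_coords /field_coords_D /rhsS /rhsI /rhsIt /rhsS_D /rhsI_D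
    /rhsIt_D /incidence_D /beta_eff_D /beta_eff /=;
  (apply: is_derive_eq; [derive_chain | rewrite /GRing.scale /=; ring]).
Qed.

Lemma differentiable_field_coords (p : 'rV[R]_6) (j : nat) : (j < 6)%N ->
  differentiable (fun x => nth 0 (field_coords x) j) p.
Proof.
case: j => [|[|[|[|[|[|j]]]]]] // _;
  rewrite /field_coords /rhsS /rhsI /rhsIt /beta_eff /coord /=;
  differentiable_chain.
Qed.

Lemma reduced_fieldE : reduced_field b0A b0B tI tR tP k s =
  \sum_(j < 6) (fun x => nth 0 (field_coords x) j *: delta_mx 0 j).
Proof.
apply: funext => x; rewrite fct_sumE [LHS]row_sum_delta.
by apply: eq_bigr => j _; rewrite mxE.
Qed.

Lemma differentiable_reduced_field p :
  differentiable (reduced_field b0A b0B tI tR tP k s) p.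
Proof.
rewrite reduced_fieldE; apply: differentiable_sum => j.
exact/differentiableZl/differentiable_field_coords/ltn_ord.
Qed.

(* MathComp's [jacobian] acts on row vectors: its entry [(i, j)] is the
   derivative of component [j] along coordinate [i]. *)
Lemma jacobian_reduced_field p (i j : 'I_6) :
  jacobian (reduced_field b0A b0B tI tR tP k s) p i j =
  nth 0 (field_coords_D (coord p) (coord (delta_mx 0 i))) j.
Proof.
have dF := differentiable_reduced_field p.
have -> : jacobian (reduced_field b0A b0B tI tR tP k s) p i j =
    ((delta_mx 0 i : 'rV_6) *m jacobian (reduced_field b0A b0B tI tR tP k s) p) 0 j.
  by rewrite -(rowE i) [in RHS]mxE.
rewrite -deriveEjacobian // derive_mx ?mxE; last exact: diff_derivable.
have -> : (fun x => reduced_field b0A b0B tI tR tP k s x ord0 j) =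
          (fun x => nth 0 (field_coords x) j) by apply: funext => x; rewrite mxE.
by have [_ ->] := is_derive_field_coords p (delta_mx 0 i) (ltn_ord j).
Qed.

End ReducedFieldJacobian.

Lemma det_mx33 (F : comNzRingType) (g : nat -> nat -> F) :
  \det (\matrix_(i < 3, j < 3) g i j) =
  g 0 0 * (g 1 1 * g 2 2 - g 1 2 * g 2 1)
  - g 0 1 * (g 1 0 * g 2 2 - g 1 2 * g 2 0)
  + g 0 2 * (g 1 0 * g 2 1 - g 1 1 * g 2 0).
Proof.
rewrite (expand_det_row _ ord0) !big_ord_recl big_ord0 /cofactor.
rewrite !(expand_det_row _ ord0) !big_ord_recl !big_ord0 /cofactor !det_mx11.
by rewrite !mxE /bump /=; ring.
Qed.

Lemma matrix_block33 (F : nzRingType) (g : nat -> nat -> F) :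
  \matrix_(i < 3 + 3, j < 3 + 3) g i j =
  block_mx (\matrix_(i < 3, j < 3) g i j) (\matrix_(i < 3, j < 3) g i (3 + j)%N)
           (\matrix_(i < 3, j < 3) g (3 + i)%N j)
           (\matrix_(i < 3, j < 3) g (3 + i)%N (3 + j)%N).
Proof. by rewrite -[LHS]submxK; congr block_mx; apply/matrixP => i j; rewrite !mxE. Qed.

Lemma horner_char_poly (F : fieldType) n (A : 'M[F]_n) z :
  (char_poly A).[z] = \det (z%:M - A).
Proof.
rewrite /char_poly -[_.[z]]/(horner_eval z _) -det_map_mx; congr (\det _).
by apply/matrixP => i j; rewrite !mxE rmorphB rmorphMn /= !horner_evalE hornerX hornerC.
Qed.

Section RouthHurwitz.
Variable R : rcfType.
Local Open Scope complex_scope.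

Lemma cubic_root_Re_lt0 (a2 a1 a0 : R) (z : R[i]) :
  0 < a2 -> 0 < a0 -> a0 < a2 * a1 ->
  z ^+ 3 + a2%:C * z ^+ 2 + a1%:C * z + a0%:C = 0 -> complex.Re z < 0.
Proof.
move=> a2_gt0 a0_gt0 a0_lt; case: z => x y; rewrite !exprS !expr0 /= => /eqP.
rewrite eq_complex /= => /andP[/eqP Re0 /eqP Im0].
have a1_gt0 : 0 < a1 by nra.
rewrite ltNge; apply/negP => x_ge0.
have {}Im0 : y * (3 * x ^+ 2 - y ^+ 2 + 2 * a2 * x + a1) = 0 by rewrite -Im0; ring.
have {}Re0 : x ^+ 3 - 3 * x * y ^+ 2 + a2 * (x ^+ 2 - y ^+ 2) + a1 * x + a0 = 0.
  by rewrite -Re0; ring.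
have x3_ge0 : 0 <= x ^+ 3 by rewrite exprn_ge0.
have a2x2_ge0 : 0 <= a2 * x ^+ 2 by rewrite mulr_ge0 ?exprn_ge0 // ltW.
have a1x_ge0 : 0 <= a1 * x by rewrite mulr_ge0 // ltW.
have a22x_ge0 : 0 <= a2 ^+ 2 * x by rewrite mulr_ge0 // exprn_ge0 // ltW.
move/eqP: Im0; rewrite mulf_eq0 => /orP[/eqP y0 | /eqP Q0].
  by move: Re0; rewrite y0; lra.
(* Subtracting [3 x + a2] times the imaginary part from the real part leaves
   a polynomial in [x] all of whose terms are negative when [x >= 0]. *)
have : x ^+ 3 - 3 * x * y ^+ 2 + a2 * (x ^+ 2 - y ^+ 2) + a1 * x + a0
   - (3 * x + a2) * (3 * x ^+ 2 - y ^+ 2 + 2 * a2 * x + a1) =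
   - 8 * x ^+ 3 - 8 * (a2 * x ^+ 2) - 2 * (a1 * x) - 2 * (a2 ^+ 2 * x)
   - (a2 * a1 - a0) by ring.
rewrite Re0 Q0 mulr0 subr0; lra.
Qed.

Definition cp3_a2 (e : nat -> nat -> R) : R := - (e 0 0 + e 1 1 + e 2 2).
Definition cp3_a1 (e : nat -> nat -> R) : R :=
  e 0 0 * e 1 1 - e 0 1 * e 1 0 + e 0 0 * e 2 2 - e 0 2 * e 2 0
  + e 1 1 * e 2 2 - e 1 2 * e 2 1.
Definition cp3_a0 (e : nat -> nat -> R) : R := - (
  e 0 0 * (e 1 1 * e 2 2 - e 1 2 * e 2 1)
  - e 0 1 * (e 1 0 * e 2 2 - e 1 2 * e 2 0)
  + e 0 2 * (e 1 0 * e 2 1 - e 1 1 * e 2 0)).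

Definition routh_hurwitz3 (e : nat -> nat -> R) : Prop :=
  [/\ 0 < cp3_a2 e, 0 < cp3_a0 e & cp3_a0 e < cp3_a2 e * cp3_a1 e].

Lemma routh_hurwitz3_ext (e e' : nat -> nat -> R) :
  (forall i j, (i < 3)%N -> (j < 3)%N -> e' i j = e i j) ->
  routh_hurwitz3 e -> routh_hurwitz3 e'.
Proof. by move=> ee'; rewrite /routh_hurwitz3 /cp3_a2 /cp3_a1 /cp3_a0 !ee'. Qed.

Lemma det_char_mx33 (e : nat -> nat -> R) (z : R[i]) :
  \det (\matrix_(i < 3, j < 3) (z *+ (i == j) - (e i j)%:C)) =
  z ^+ 3 + (cp3_a2 e)%:C * z ^+ 2 + (cp3_a1 e)%:C * z + (cp3_a0 e)%:C.
Proof.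
rewrite (det_mx33 (fun i j => z *+ (i == j) - (e i j)%:C)) /= ?mulr1n ?mulr0n.
by rewrite /cp3_a2 /cp3_a1 /cp3_a0 !(rmorphD, rmorphN, rmorphM, rmorphB) /=; ring.
Qed.

Lemma routh_hurwitz3_root (e : nat -> nat -> R) (z : R[i]) : routh_hurwitz3 e ->
  \det (\matrix_(i < 3, j < 3) (z *+ (i == j) - (e i j)%:C)) = 0 ->
  complex.Re z < 0.
Proof. by case=> ? ? ?; rewrite det_char_mx33; exact: cubic_root_Re_lt0. Qed.

Lemma block_triangular_root_Re_lt0 (e : nat -> nat -> R) (z : R[i]) :
  ((forall i j, (i < 3)%N -> (j < 3)%N -> e i (3 + j)%N = 0) \/
   (forall i j, (i < 3)%N -> (j < 3)%N -> e (3 + i)%N j = 0)) ->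
  routh_hurwitz3 e -> routh_hurwitz3 (fun i j => e (3 + i)%N (3 + j)%N) ->
  root (char_poly (map_mx (fun r : R => r%:C) (\matrix_(i < 6, j < 6) e i j))) z ->
  complex.Re z < 0.
Proof.
move=> block_tri hurA hurB; rewrite /root horner_char_poly.
pose g i j : R[i] := z *+ (i == j) - (e i j)%:C.
have -> : z%:M - map_mx (fun r : R => r%:C) (\matrix_(i < 6, j < 6) e i j) =
    \matrix_(i < 3 + 3, j < 3 + 3) g i j by apply/matrixP => i j; rewrite !mxE.
have gB : \matrix_(i < 3, j < 3) g (3 + i)%N (3 + j)%N =
    \matrix_(i < 3, j < 3) (z *+ (i == j) - (e (3 + i)%N (3 + j)%N)%:C).
  by apply/matrixP => i j; rewrite !mxE /g eqn_add2l.
have g0 i j : (i < 3 <= j)%N \/ (j < 3 <= i)%N -> e i j = 0 -> g i j = 0.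
  move=> ij eij; rewrite /g eij subr0 (_ : (i == j) = false) ?mulr0n //.
  by apply/negbTE/eqP; lia.
rewrite matrix_block33; case: block_tri => [eA0 | eB0].
- have -> : \matrix_(i < 3, j < 3) g i (3 + j)%N = 0.
    apply/matrixP => i j; rewrite !mxE; apply: g0; last exact: eA0.
    by left; have := ltn_ord i; lia.
  rewrite (@det_lblock _ 3 3) gB mulf_eq0 => /orP[] /eqP.
    exact: routh_hurwitz3_root.
  exact: routh_hurwitz3_root hurB.
- have -> : \matrix_(i < 3, j < 3) g (3 + i)%N j = 0.
    apply/matrixP => i j; rewrite !mxE; apply: g0; last exact: eB0.
    by right; have := ltn_ord j; lia.
  rewrite (@det_ublock _ 3 3) gB mulf_eq0 => /orP[] /eqP.
    exact: routh_hurwitz3_root.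
  exact: routh_hurwitz3_root hurB.
Qed.

End RouthHurwitz.

Definition table (R : rcfType) (m : seq (seq R)) (i j : nat) : R :=
  nth 0 (nth [::] m i) j.

Section BoundaryBlocks.
Variable R : rcfType.

Ltac pos := first [ assumption | apply: addr_gt0; pos | apply: mulr_gt0; pos ].

Lemma routh_hurwitz3_resident (a p q r K : R) :
  0 < a -> 0 < p -> 0 < q -> 0 < r -> 0 < K ->
  routh_hurwitz3 (table [:: [:: -a - p; a; 0]; [:: -q - p; 0; r]; [:: K; -K; -r]]).
Proof.
rewrite /routh_hurwitz3; set e := table _ => a_gt0 p_gt0 q_gt0 r_gt0 K_gt0.
set a1 := a * q + a * p + a * r + p * r + r * K.
have -> : cp3_a2 e = a + p + r by rewrite /cp3_a2 /e /table /=; ring.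
have -> : cp3_a1 e = a1 by rewrite /cp3_a1 /e /table /a1 /=; ring.
have -> : cp3_a0 e = p * r * K + a * q * r + a * p * r.
  by rewrite /cp3_a0 /e /table /=; ring.
split; [pos | pos | rewrite -subr_gt0].
have -> : (a + p + r) * a1 - (p * r * K + a * q * r + a * p * r) =
  a * a1 + p * (a * q + a * p + a * r + p * r) + r * (a * r + p * r + r * K).
  by rewrite /a1; ring.
pos.
Qed.

Lemma routh_hurwitz3_invader (g p q r : R) : 0 < p -> g < q -> 0 < r ->
  routh_hurwitz3 (table [:: [:: -p; 0; 0]; [:: -g - p; g - q; r]; [:: 0; 0; -r]]).
Proof.
rewrite /routh_hurwitz3; set e := table _ => p_gt0; rewrite -subr_gt0; set d := q - g => d_gt0 r_gt0.
set a1 := p * d + p * r + d * r.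
have -> : cp3_a2 e = p + d + r by rewrite /cp3_a2 /e /d /table /=; ring.
have -> : cp3_a1 e = a1 by rewrite /cp3_a1 /e /table /a1 /d /=; ring.
have -> : cp3_a0 e = p * r * d by rewrite /cp3_a0 /e /d /table /=; ring.
split; [pos | pos | rewrite -subr_gt0].
have -> : (p + d + r) * a1 - p * r * d = p * a1 + d * a1 + r * (p * r + d * r).
  by rewrite /a1; ring.
pos.
Qed.

End BoundaryBlocks.

Section BoundaryEquilibria.
Variables (R : realType) (b0A b0B tI tR tP k s : R).
Hypotheses (hb0A : 0 < b0A) (hb0B : 0 < b0B) (htI : 0 < tI) (htR : 0 < tR)
  (htP : 0 < tP) (hk : 0 < k) (hs : 0 <= s <= 1).

Let itI_gt0 : 0 < tI^-1. Proof. by rewrite invr_gt0. Qed.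
Let itR_gt0 : 0 < tR^-1. Proof. by rewrite invr_gt0. Qed.
Let itP_gt0 : 0 < tP^-1. Proof. by rewrite invr_gt0. Qed.

Lemma coord_state6 (a0 a1 a2 a3 a4 a5 : R) n : (n < 6)%N ->
  coord (state6 a0 a1 a2 a3 a4 a5) n = nth 0 [:: a0; a1; a2; a3; a4; a5] n.
Proof. by move=> hn; rewrite /coord /state6 mxE inordK. Qed.

Lemma coord_delta (i : 'I_6) n : (n < 6)%N ->
  coord (delta_mx 0 i : 'rV[R]_6) n = (i == n :> nat)%:R.
Proof. by move=> hn; rewrite /coord mxE /= -val_eqE /= inordK // eq_sym. Qed.

Definition jacobian_entries (a : seq R) (i j : nat) : R :=
  nth 0 (field_coords_D b0A b0B tI tR tP k s (nth 0 a) (fun q => (i == q)%:R)) j.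

Lemma jacobian_state6 (a0 a1 a2 a3 a4 a5 : R) :
  jacobian (reduced_field b0A b0B tI tR tP k s) (state6 a0 a1 a2 a3 a4 a5) =
  \matrix_(i < 6, j < 6) jacobian_entries [:: a0; a1; a2; a3; a4; a5] i j.
Proof.
apply/matrixP => i j; rewrite jacobian_reduced_field mxE.
by rewrite /field_coords_D !coord_state6 // !coord_delta.
Qed.

Ltac jacobian_entry resident_eq :=
  rewrite /table /jacobian_entries /field_coords_D /rhsS_D /rhsI_D /rhsIt_D
    /incidence_D /beta_eff_D /beta_eff /=;
  rewrite ?mulr1n ?mulr0n ?mulr0 ?oppr0 ?expR0; (try rewrite -resident_eq); ring.

(* The hypotheses say that [(S, I, I)] is an endemic equilibrium of the
   resident disease and that the invasion rate [b0B (1 - s (1 - e^{-k I}))] of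
   the absent disease is below its recovery rate [1 / tI]. *)
Lemma LAS_state6_B_free (SA IA : R) : 0 < IA ->
  b0A * expR (- (k * IA)) * SA = tI^-1 ->
  b0B * (1 - s * (1 - expR (- (k * IA)))) < tI^-1 ->
  LAS b0A b0B tI tR tP k s (state6 SA IA IA 1 0 0).
Proof.
move=> IA_gt0 resident_eq invader_lt z; rewrite /eigenvalueC jacobian_state6.
apply: block_triangular_root_Re_lt0.
- by left => [] [|[|[|i]]] // [|[|[|j]]] // _ _; jacobian_entry resident_eq.
- have a_gt0 : 0 < b0A * expR (- (k * IA)) * IA by rewrite !mulr_gt0 ?expR_gt0.
  have K_gt0 : 0 < k * tI^-1 * IA by rewrite !mulr_gt0.
  apply: routh_hurwitz3_ext
    (routh_hurwitz3_resident a_gt0 itR_gt0 itI_gt0 itP_gt0 K_gt0).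
  by move=> [|[|[|i]]] // [|[|[|j]]] // _ _; jacobian_entry resident_eq.
- apply: routh_hurwitz3_ext (routh_hurwitz3_invader itR_gt0 invader_lt itP_gt0).
  by move=> [|[|[|i]]] // [|[|[|j]]] // _ _; jacobian_entry resident_eq.
Qed.

Lemma LAS_state6_A_free (SB IB : R) : 0 < IB ->
  b0B * expR (- (k * IB)) * SB = tI^-1 ->
  b0A * (1 - s * (1 - expR (- (k * IB)))) < tI^-1 ->
  LAS b0A b0B tI tR tP k s (state6 1 0 0 SB IB IB).
Proof.
move=> IB_gt0 resident_eq invader_lt z; rewrite /eigenvalueC jacobian_state6.
apply: block_triangular_root_Re_lt0.
- by right => [] [|[|[|i]]] // [|[|[|j]]] // _ _; jacobian_entry resident_eq.
- apply: routh_hurwitz3_ext (routh_hurwitz3_invader itR_gt0 invader_lt itP_gt0).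
  by move=> [|[|[|i]]] // [|[|[|j]]] // _ _; jacobian_entry resident_eq.
- have a_gt0 : 0 < b0B * expR (- (k * IB)) * IB by rewrite !mulr_gt0 ?expR_gt0.
  have K_gt0 : 0 < k * tI^-1 * IB by rewrite !mulr_gt0.
  apply: routh_hurwitz3_ext
    (routh_hurwitz3_resident a_gt0 itR_gt0 itI_gt0 itP_gt0 K_gt0).
  by move=> [|[|[|i]]] // [|[|[|j]]] // _ _; jacobian_entry resident_eq.
Qed.

Lemma Ibar_resident_eq (b0 I : R) : Ibar_spec b0 tI tR k I ->
  b0 * expR (- (k * I)) * (1 - I - tR / tI * I) = tI^-1.
Proof.
move=> [I_gt0 expkI]; rewrite expRN expkI.
have : b0 * tI - b0 * (tI + tR) * I != 0 by rewrite -expkI gt_eqF ?expR_gt0.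
by move=> ?; field; rewrite gt_eqF.
Qed.

Lemma Ibar_expR_lt_R0 (b0 I : R) : 0 < b0 -> Ibar_spec b0 tI tR k I ->
  expR (k * I) < b0 * tI.
Proof.
move=> b0_gt0 [I_gt0 ->].
have : 0 < b0 * (tI + tR) * I by rewrite !mulr_gt0 ?addr_gt0.
lra.
Qed.

(* With [X = e^{k Ibar}], the bound on [b tI] is the threshold of the theorem. *)
Lemma invasion_threshold (b X : R) : 1 <= X -> b * tI < X / (X - s * (X - 1)) ->
  b * (1 - s * (1 - X^-1)) < tI^-1 /\ b * tI < X.
Proof.
move=> X_ge1; set D := X - s * (X - 1) => b_lt.
have D_ge1 : 1 <= D.
  have : 0 <= (1 - s) * (X - 1) by rewrite mulr_ge0 // subr_ge0; case/andP: hs.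
  by rewrite /D; lra.
have D_gt0 : 0 < D by lra.
have X_gt0 : 0 < X by lra.
have bD_lt : b * tI * D < X by rewrite -ltr_pdivlMr.
split.
- have -> : b * (1 - s * (1 - X^-1)) = b * tI * D / X * tI^-1.
    by rewrite /D; field; rewrite !gt_eqF.
  by rewrite -[ltRHS]mul1r ltr_pM2r // ltr_pdivrMr // mul1r.
- by apply: (lt_le_trans b_lt); rewrite ler_pdivrMr // ler_peMr // ltW.
Qed.

Lemma B_free_eq_LAS (IA : R) : Ibar_spec b0A tI tR k IA ->
  b0B * tI < expR (k * IA) / (expR (k * IA) - s * (expR (k * IA) - 1)) ->
  LAS b0A b0B tI tR tP k s (B_free_eq tI tR IA) /\ b0B * tI < b0A * tI.
Proof.
move=> hI /invasion_threshold[|invader_lt b0B_lt].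
  by rewrite -expR0 ler_expR mulr_ge0 // ltW //; case: hI.
split; last exact: lt_trans b0B_lt (Ibar_expR_lt_R0 hb0A hI).
apply: LAS_state6_B_free; first by case: hI.
  exact: Ibar_resident_eq.
by rewrite expRN.
Qed.

Lemma A_free_eq_LAS (IB : R) : Ibar_spec b0B tI tR k IB ->
  b0A * tI < expR (k * IB) / (expR (k * IB) - s * (expR (k * IB) - 1)) ->
  LAS b0A b0B tI tR tP k s (A_free_eq tI tR IB) /\ b0A * tI < b0B * tI.
Proof.
move=> hI /invasion_threshold[|invader_lt b0A_lt].
  by rewrite -expR0 ler_expR mulr_ge0 // ltW //; case: hI.
split; last exact: lt_trans b0A_lt (Ibar_expR_lt_R0 hb0B hI).
apply: LAS_state6_A_free; first by case: hI.
  exact: Ibar_resident_eq.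
by rewrite expRN.
Qed.

End BoundaryEquilibria.

Theorem theorem4 (R : realType) (b0A b0B tI tR tP k s : R)
  (hb0A : 0 < b0A) (hb0B : 0 < b0B) (htI : 0 < tI) (htR : 0 < tR)
  (htP : 0 < tP) (hk : 0 < k) (hs : 0 <= s <= 1) :
  (* (1) s = 0 *)
  (s = 0 ->
    (forall IA : R, 1 < b0A * tI -> b0B * tI < 1 -> Ibar_spec b0A tI tR k IA ->
       LAS b0A b0B tI tR tP k s (B_free_eq tI tR IA)) /\
    (forall IB : R, 1 < b0B * tI -> b0A * tI < 1 -> Ibar_spec b0B tI tR k IB ->
       LAS b0A b0B tI tR tP k s (A_free_eq tI tR IB))) /\
  (* (2) s = 1 *)
  (s = 1 ->
    (forall IA : R, 1 < b0A * tI -> Ibar_spec b0A tI tR k IA ->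
       b0B * tI < expR (k * IA) ->
       LAS b0A b0B tI tR tP k s (B_free_eq tI tR IA) /\ b0B * tI < b0A * tI) /\
    (forall IB : R, 1 < b0B * tI -> Ibar_spec b0B tI tR k IB ->
       b0A * tI < expR (k * IB) ->
       LAS b0A b0B tI tR tP k s (A_free_eq tI tR IB) /\ b0A * tI < b0B * tI)) /\
  (* (3) 0 < s < 1 *)
  (0 < s < 1 ->
    (forall IA : R, 1 < b0A * tI -> Ibar_spec b0A tI tR k IA ->
       b0B * tI < expR (k * IA) / (expR (k * IA) - s * (expR (k * IA) - 1)) ->
       LAS b0A b0B tI tR tP k s (B_free_eq tI tR IA) /\ b0B * tI < b0A * tI) /\
    (forall IB : R, 1 < b0B * tI -> Ibar_spec b0B tI tR k IB ->
       b0A * tI < expR (k * IB) / (expR (k * IB) - s * (expR (k * IB) - 1)) ->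
       LAS b0A b0B tI tR tP k s (A_free_eq tI tR IB) /\ b0A * tI < b0B * tI)).
Proof.
have LAS_B IA := @B_free_eq_LAS R b0A b0B tI tR tP k s hb0A htI htR htP hk hs IA.
have LAS_A IB := @A_free_eq_LAS R b0A b0B tI tR tP k s hb0B htI htR htP hk hs IB.
have threshold_s0 I : expR (k * I) / (expR (k * I) - 0 * (expR (k * I) - 1)) = 1.
  by rewrite mul0r subr0 divff // gt_eqF ?expR_gt0.
have threshold_s1 I :
    expR (k * I) / (expR (k * I) - 1 * (expR (k * I) - 1)) = expR (k * I).
  by rewrite mul1r opprB addrC subrK divr1.
split; [move=> s0 | split; [move=> s1 | move=> _]]; subst.
- split=> [IA _ b0B_lt hI | IB _ b0A_lt hI].
    by have := LAS_B IA hI; rewrite threshold_s0 => /(_ b0B_lt) [].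
  by have := LAS_A IB hI; rewrite threshold_s0 => /(_ b0A_lt) [].
- split=> [IA _ hI b0B_lt | IB _ hI b0A_lt].
    by apply: LAS_B; rewrite ?threshold_s1.
  by apply: LAS_A; rewrite ?threshold_s1.
- by split=> [IA _ | IB _]; [exact: LAS_B | exact: LAS_A].
Qed.
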